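(* Let $\{a_i\},\{b_i\},\{c_i\},\{d_i\}$ ($i\in\mathbb{Z}$) be complex sequences and $m,n\ge0$ integers such that $a_j-c_j$, $a_j-d_j$, $b_j-c_j$, $b_j-d_j$ are nonzero for $-n\le j\le m$. Then $$\sum_{k=-n}^{m}(a_k-b_k)(c_k-d_k)\frac{\prod_{j=1}^{k-1}(a_j-c_j)}{\prod_{j=1}^{k}(a_j-d_j)}\frac{\prod_{j=1}^{k-1}(b_j-d_j)}{\prod_{j=1}^{k}(b_j-c_j)} =\frac{\prod_{j=1}^{m}(a_j-c_j)}{\prod_{j=1}^{m}(a_j-d_j)}\frac{\prod_{j=1}^{m}(b_j-d_j)}{\prod_{j=1}^{m}(b_j-c_j)}-\frac{\prod_{j=-n}^{0}(a_j-d_j)}{\prod_{j=-n}^{0}(a_j-c_j)}\frac{\prod_{j=-n}^{0}(b_j-c_j)}{\prod_{j=-n}^{0}(b_j-d_j)}.$$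
   Context: Products over integer ranges follow the convention: $\prod_{j=k}^{m}A_j=A_k\cdots A_m$ if $m\ge k$; $=1$ if $m=k-1$; $=(A_{m+1}\cdots A_{k-1})^{-1}$ if $m\le k-2$. *)

From HB Require Import structures.
From mathcomp Require Import all_boot all_order all_algebra.
From mathcomp Require Import reals.
From mathcomp.real_closed Require Import complex.
Set Implicit Arguments. Unset Strict Implicit. Unset Printing Implicit Defensive.
Import Order.TTheory GRing.Theory Num.Theory.
Local Open Scope ring_scope.

(* Product over an integer range with the paper's convention:
   prodZ A k m = A_k ... A_m            if m >= k,
               = 1                      if m = k - 1,
               = (A_{m+1} ... A_{k-1})^-1 if m <= k - 2. *)
Definition prodZ {F : fieldType} (A : int -> F) (k m : int) : F :=
  if (k <= m)%R then \prod_(0 <= i < absz (m - k + 1)%R) A (k + i%:Z)%R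
  else if m == (k - 1)%R then 1
  else (\prod_(0 <= i < absz (k - 1 - m)%R) A (m + 1 + i%:Z)%R)^-1.

Definition sumZ {F : fieldType} (f : int -> F) (lo hi : int) : F :=
  \sum_(0 <= i < absz (hi - lo + 1)%R) f (lo + i%:Z)%R.

(* With r(k) the ratio of the four partial products over 1..k, the identity
   (a - b)(c - d) = (a - c)(b - d) - (a - d)(b - c) makes the k-th summand
   equal to r(k) - r(k - 1), so the sum telescopes to r(m) - r(-n-1).  By the
   convention for products over reversed ranges, a product over 1..-n-1 is the
   inverse of the product over -n..0, which turns r(-n-1) into the second term. *)

From HB Require Import structures.
From mathcomp Require Import all_boot all_order all_algebra.
From mathcomp Require Import reals.
From mathcomp.real_closed Require Import complex.
From mathcomp Require Import zify ring.
Import Order.TTheory GRing.Theory Num.Theory.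
Set Implicit Arguments. Unset Strict Implicit. Unset Printing Implicit Defensive.
Local Open Scope ring_scope.

Section ProdZ.
Variables (F : fieldType) (A : int -> F).

Lemma prodZ_flip k m : prodZ A k m = (prodZ A (m + 1) (k - 1))^-1.
Proof.
rewrite /prodZ; have [le_km | lt_mk] := lerP k m.
  rewrite [in RHS]ifF; last by lia.
  rewrite ifF ?invrK; last by lia.
  by rewrite (_ : absz (m + 1 - 1 - (k - 1))%R = absz (m - k + 1)%R);
    [apply: eq_bigr => i _; congr (A _) | ]; lia.
have [->|ne_mk] := eqVneq m (k - 1).
  rewrite subrK ifF ?eqxx ?invr1 //; lia.
rewrite ifT; last by lia.
by rewrite (_ : absz (k - 1 - (m + 1) + 1)%R = absz (k - 1 - m)%R) //; lia.
Qed.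

Lemma prodZ_ord k (p : nat) : prodZ A k (k + p%:Z - 1) = \prod_(i < p) A (k + i%:Z).
Proof.
rewrite /prodZ big_mkord; case: p => [|p].
  by rewrite big_ord0 ifF ?addr0 ?eqxx //; lia.
rewrite ifT; last lia.
by rewrite (_ : absz _ = p.+1) //; lia.
Qed.

Lemma prodZ_recr k m : k <= m -> prodZ A k m = prodZ A k (m - 1) * A m.
Proof.
move=> le_km; have [p ->] : exists p : nat, m = k + p.+1%:Z - 1.
  by exists (absz (m - k)%R); lia.
rewrite (_ : k + p.+1%:Z - 1 - 1 = k + p%:Z - 1); last by lia.
by rewrite !prodZ_ord big_ord_recr /=; congr (_ * A _); lia.
Qed.

Lemma prodZ_recl k m : k <= m -> prodZ A k m = A k * prodZ A (k + 1) m.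
Proof.
move=> le_km; have [p ->] : exists p : nat, m = k + p.+1%:Z - 1.
  by exists (absz (m - k)%R); lia.
rewrite [in RHS](_ : k + p.+1%:Z - 1 = k + 1 + p%:Z - 1); last by lia.
rewrite !prodZ_ord big_ord_recl addr0; congr (_ * _).
by apply: eq_bigr => i _; rewrite lift0; congr (A _); lia.
Qed.

Lemma prodZ_recr_neq0 k m : A m != 0 -> prodZ A k m = prodZ A k (m - 1) * A m.
Proof.
move=> Am_nz; have [le_km | lt_mk] := lerP k m; first exact: prodZ_recr.
rewrite prodZ_flip [prodZ A k (m - 1)]prodZ_flip subrK.
rewrite (@prodZ_recl m (k - 1)); last by lia.
by rewrite invfM mulrAC mulVf ?mul1r.
Qed.

End ProdZ.

Lemma sumZ_telescope (F : fieldType) (f u : int -> F) lo hi : lo <= hi + 1 ->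
    (forall k, lo <= k <= hi -> u k = f k - f (k - 1)) ->
  sumZ u lo hi = f hi - f (lo - 1).
Proof.
move=> le_lo_hi uE; rewrite /sumZ (telescope_sumr_eq (fun i : nat => f (lo + i%:Z - 1))) //.
  by rewrite addr0; congr (f _ - _); lia.
by move=> i /andP[_ lt_i]; rewrite uE; [congr (f _ - f _) | ]; lia.
Qed.

Section ProdRatio.
Variables (F : fieldType) (a b c d : int -> F).

Definition prod_ratio (l k : int) : F :=
  prodZ (fun j => a j - c j) l k / prodZ (fun j => a j - d j) l k
  * (prodZ (fun j => b j - d j) l k / prodZ (fun j => b j - c j) l k).

Lemma prod_ratio_increment l k :
    [/\ a k - c k != 0, a k - d k != 0, b k - c k != 0 & b k - d k != 0] ->
  (a k - b k) * (c k - d k)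
    * (prodZ (fun j => a j - c j) l (k - 1) / prodZ (fun j => a j - d j) l k)
    * (prodZ (fun j => b j - d j) l (k - 1) / prodZ (fun j => b j - c j) l k)
  = prod_ratio l k - prod_ratio l (k - 1).
Proof.
case=> ac_nz ad_nz bc_nz bd_nz; rewrite /prod_ratio.
rewrite [prodZ _ l k]prodZ_recr_neq0 // [prodZ _ l k]prodZ_recr_neq0 //.
rewrite [prodZ _ l k]prodZ_recr_neq0 // [prodZ _ l k]prodZ_recr_neq0 // !invfM.
(* The partial products up to k - 1 may vanish, so [field] must treat their
   inverses as independent unknowns. *)
move: (prodZ _ l (k - 1)) (prodZ _ l (k - 1))^-1 (prodZ _ l (k - 1)) (prodZ _ l (k - 1))^-1.
move=> x y' z w'; field.
by rewrite ad_nz bc_nz.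
Qed.

Lemma prod_ratio_flip l k :
  prod_ratio l k =
  prodZ (fun j => a j - d j) (k + 1) (l - 1) / prodZ (fun j => a j - c j) (k + 1) (l - 1)
  * (prodZ (fun j => b j - c j) (k + 1) (l - 1) / prodZ (fun j => b j - d j) (k + 1) (l - 1)).
Proof.
by rewrite /prod_ratio !(prodZ_flip _ l k) !invrK; congr (_ * _); apply: mulrC.
Qed.

End ProdRatio.

Local Open Scope complex_scope.

Theorem corollary3p4 (R : realType) (a b c d : int -> R[i]) (m n : nat) :
  (forall j : int, (- n%:Z <= j)%R -> (j <= m%:Z)%R ->
     [/\ a j - c j != 0, a j - d j != 0, b j - c j != 0 & b j - d j != 0]) ->
  sumZ (fun k : int =>
          (a k - b k) * (c k - d k)
          * (prodZ (fun j => a j - c j) 1 (k - 1) / prodZ (fun j => a j - d j) 1 k)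
          * (prodZ (fun j => b j - d j) 1 (k - 1) / prodZ (fun j => b j - c j) 1 k))
       (- n%:Z) m%:Z
  = prodZ (fun j => a j - c j) 1 m%:Z / prodZ (fun j => a j - d j) 1 m%:Z
      * (prodZ (fun j => b j - d j) 1 m%:Z / prodZ (fun j => b j - c j) 1 m%:Z)
    - prodZ (fun j => a j - d j) (- n%:Z) 0 / prodZ (fun j => a j - c j) (- n%:Z) 0
      * (prodZ (fun j => b j - c j) (- n%:Z) 0 / prodZ (fun j => b j - d j) (- n%:Z) 0).
Proof.
move=> nz; rewrite (sumZ_telescope (f := prod_ratio a b c d 1)); first last.
- by move=> k /andP[le_nk le_km]; apply/prod_ratio_increment/nz.
- by lia.
by rewrite [prod_ratio _ _ _ _ _ (- _ - 1)]prod_ratio_flip subrK subrr.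
Qed.
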